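(* In the single-period model described in the context, with short sales prohibitions (admissible strategies $h=(h_0,\dots,h_M)$ satisfy $h_0\in\mathbb{R}$ arbitrary and $h_m\ge 0$ for $m=1,\dots,M$), there is no arbitrage under model uncertainty if and only if there exists a probability measure $Q$ on $\Omega$ with $Q(\omega)>0$ for all $\omega\in\Omega$ and $E_Q[\Delta S_m^*]\le 0$ for all $m=1,\dots,M$.
   Context: Single-period model: $\Omega=\{\omega_1,\dots,\omega_K\}$ is a finite sample space with all subsets measurable. $\mathcal{P}$ is a nonempty family of probability measures on $\Omega$ with $\sup_{P\in\mathcal{P}}P(\omega)>0$ for every $\omega\in\Omega$. There is a bond with $S_0(0)=1$, $S_0(1)=1+r$, $r\ge 0$ a constant, and $M$ risky securities with known initial prices $S_m(0)>0$ and random terminal prices $S_m(1):\Omega\to\mathbb{R}$, $m=1,\dots,M$. Discounted prices: $S_m^*(t)=S_m(t)/S_0(t)$, $t=0,1$, and $\Delta S_m^*=S_m^*(1)-S_m^*(0)$. For a trading strategy $h=(h_0,\dots,h_M)$, the discounted portfolio value is $V_t^*=h_0+\sum_{m=1}^M h_m S_m^*(t)$, $t=0,1$. A trading strategy is an arbitrage under model uncertainty if (i) $V_0^*=0$ and (ii) $V_1^*(\omega)\ge 0$ for all $\omega\in\Omega$ and $\sup_{P\in\mathcal{P}}E_P[V_1^*]>0$. ''No arbitrage under model uncertainty'' means no admissible trading strategy is an arbitrage under model uncertainty. *)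

From HB Require Import structures.
From mathcomp Require Import all_boot all_order all_algebra.
From mathcomp Require Import reals.
Set Implicit Arguments. Unset Strict Implicit. Unset Printing Implicit Defensive.
Import Order.TTheory GRing.Theory Num.Theory.
Local Open Scope ring_scope.

Section Model.
Variables (R : realType) (Omega : finType).

Definition is_prob (P : {ffun Omega -> R}) : Prop :=
  (forall w, 0 <= P w) /\ \sum_(w : Omega) P w = 1.

Definition expect (P : {ffun Omega -> R}) (X : Omega -> R) : R :=
  \sum_(w : Omega) P w * X w.

Variables (M : nat) (r : R) (S0 : 'I_M -> R) (S1 : 'I_M -> Omega -> R).

(* discounted prices: S*_m(0) = S_m(0) / 1, S*_m(1) = S_m(1) / (1 + r) *)
Definition disc1 (m : 'I_M) (w : Omega) : R := S1 m w / (1 + r).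
Definition dS (m : 'I_M) (w : Omega) : R := disc1 m w - S0 m.

Definition V0 (h0 : R) (h : 'I_M -> R) : R := h0 + \sum_(m < M) h m * S0 m.
Definition V1 (h0 : R) (h : 'I_M -> R) (w : Omega) : R :=
  h0 + \sum_(m < M) h m * disc1 m w.

Definition admissible (h : 'I_M -> R) : Prop := forall m, 0 <= h m.

(* Arbitrage under model uncertainty for the family Pfam.
   sup_{P in Pfam} E_P[V1] > 0 is written as: some P in Pfam has E_P[V1] > 0. *)
Definition arbitrage_MU (Pfam : {ffun Omega -> R} -> Prop)
    (h0 : R) (h : 'I_M -> R) : Prop :=
  V0 h0 h = 0 /\ (forall w, 0 <= V1 h0 h w) /\
  exists2 P, Pfam P & 0 < expect P (V1 h0 h).

Definition NA_MU (Pfam : {ffun Omega -> R} -> Prop) : Prop :=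
  ~ exists h0 h, admissible h /\ arbitrage_MU Pfam h0 h.

End Model.

From HB Require Import structures.
From mathcomp Require Import all_boot all_order all_algebra.
From mathcomp Require Import reals.
From mathcomp Require Import ring lra.
From Stdlib Require Import Classical.
Set Implicit Arguments.
Unset Strict Implicit.
Unset Printing Implicit Defensive.
Import Order.TTheory GRing.Theory Num.Theory.
Local Open Scope ring_scope.

(* If Q > 0 and E_Q[dS_m] <= 0, the Q-expectation of the gains of an admissible
   strategy is <= 0, whereas an arbitrage has gains >= 0 and positive in some
   state, hence a positive Q-expectation.  Conversely, look for unnormalised
   state prices x_w >= t > 0 with sum_w x_w dS_m(w) <= 0; by Motzkin's
   transposition theorem (proved by Fourier-Motzkin elimination) either they
   exist, and normalising x gives Q, or there are holdings h >= 0 whose gains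
   sum_m h_m dS_m are >= 0 everywhere and > 0 somewhere; since every state is
   charged by some model, such an h is an arbitrage. *)

Section Motzkin.
Variables (R : realFieldType) (V : lmodType R).

Definition linear_form (f : V -> R) := linear_for (@GRing.mul R) f.

Definition feasible {I : Type} (d : V -> R) (C : I -> V -> R) : Prop :=
  exists x, 0 < d x /\ forall j, 0 <= C j x.

Definition infeasibility_certificate {I : finType} (d : V -> R) (C : I -> V -> R) : Prop :=
  exists y (z : I -> R), 0 < y /\ (forall j, 0 <= z j) /\
    forall v, y * d v + \sum_j z j * C j v = 0.

Lemma linear_form0 f : linear_form f -> f 0 = 0.
Proof. by move=> lf; have := lf 1 0 0; rewrite scale1r addr0 mul1r; lra. Qed.

Lemma linear_formZ f a v : linear_form f -> f (a *: v) = a * f v.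
Proof. by move=> lf; rewrite -[a *: v]addr0 lf linear_form0 ?addr0. Qed.

Lemma linear_formBZ f v t x : linear_form f -> f (v - t *: x) = f v - t * f x.
Proof. by move=> lf; rewrite addrC -scaleNr lf mulNr addrC. Qed.

Lemma linear_form_proj f c x : linear_form f -> linear_form c ->
  linear_form (fun v => f (v - (c v / c x) *: x)).
Proof. move=> lf lc a u v; rewrite !linear_formBZ // lf lc; ring. Qed.

Lemma linear_form_gt0_or_eq0 d : linear_form d -> (exists x, 0 < d x) \/ (forall v, d v = 0).
Proof.
move=> ld; case: (classic (forall v, d v = 0)) => [|/not_all_ex_not [v /eqP dv]].
  by right.
left; case: (ltrgtP 0 (d v)) => [dv_gt0|dv_lt0|dv0]; first by exists v.
  by exists (- v); rewrite -scaleN1r linear_formZ // mulN1r oppr_gt0.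
by rewrite dv0 eqxx in dv.
Qed.

Lemma infeasibility_certificate_lift0 n d (C : 'I_n.+1 -> V -> R) y t (z : 'I_n -> R) :
  0 < y -> 0 <= t -> (forall i, 0 <= z i) ->
  (forall v, y * d v + t * C ord0 v + \sum_(i < n) z i * C (lift ord0 i) v = 0) ->
  infeasibility_certificate d C.
Proof.
move=> y_gt0 t_ge0 z_ge0 eq0; exists y, (fun j => oapp z t (unlift ord0 j)).
split=> //; split=> [j|v]; first by case: (unliftP ord0 j) => [i|] _ /=.
rewrite big_ord_recl unlift_none /= -[RHS](eq0 v) addrA; congr (_ + _).
by apply: eq_bigr => i _; rewrite liftK.
Qed.

Lemma motzkin_ord n d (C : 'I_n -> V -> R) : linear_form d -> (forall j, linear_form (C j)) ->
  feasible d C \/ infeasibility_certificate d C.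
Proof.
elim: n C d => [|n IHn] C d ld lC.
  case: (linear_form_gt0_or_eq0 ld) => [[x dx_gt0]|d0]; first by left; exists x; split=> // -[].
  by right; exists 1, (fun=> 0); do 2!split=> //; move=> v; rewrite big_ord0 d0; lra.
pose C' i := C (lift ord0 i); pose c := C ord0.
case: (IHn C' d ld (fun i => lC _)) => [[x [dx_gt0 C'x_ge0]]|[y [z [y_gt0 [z_ge0 eq0]]]]];
  last by right; apply: (infeasibility_certificate_lift0 y_gt0 (lexx 0) z_ge0) => v;
          rewrite mul0r addr0 eq0.
have [cx_ge0|cx_lt0] := lerP 0 (c x).
  by left; exists x; split=> // j; case: (unliftP ord0 j) => [i ->|->]; [exact: C'x_ge0|].
have cx_neq0 : c x != 0 by rewrite ltr0_neq0.
(* Eliminate the last constraint: solve the smaller system on the kernel of c. *)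
pose P v := v - (c v / c x) *: x.
case: (IHn (fun i v => C' i (P v)) (fun v => d (P v)) (linear_form_proj _ ld (lC _))
          (fun i => linear_form_proj _ (lC _) (lC _)))
  => [[w [dPw_gt0 C'Pw_ge0]]|[y [z [y_gt0 [z_ge0 eq0]]]]].
  left; exists (P w); split=> // j; case: (unliftP ord0 j) => [i ->|->]; first exact: C'Pw_ge0.
  by rewrite /P linear_formBZ // -/c divfK // subrr.
right; pose t := (y * d x + \sum_(i < n) z i * C' i x) / - c x.
have t_ge0 : 0 <= t.
  apply: divr_ge0; last by rewrite oppr_ge0 ltW.
  by apply: addr_ge0; [rewrite mulr_ge0 ?ltW | apply: sumr_ge0 => i _; rewrite mulr_ge0].
apply: (infeasibility_certificate_lift0 y_gt0 t_ge0 z_ge0) => v; rewrite -[RHS](eq0 v) /P.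
rewrite !linear_formBZ // /C'.
under [in RHS]eq_bigr do rewrite (linear_formBZ _ _ _ (lC _)) mulrBr mulrCA.
by rewrite sumrB -mulr_sumr /t -/c; field.
Qed.

Lemma motzkin (I : finType) d (C : I -> V -> R) :
  linear_form d -> (forall i, linear_form (C i)) ->
  feasible d C \/ infeasibility_certificate d C.
Proof.
move=> ld lC; case: (motzkin_ord (C := fun j : 'I_#|I| => C (enum_val j)) ld (fun j => lC _))
  => [[x [dx_gt0 Cx_ge0]]|[y [z [y_gt0 [z_ge0 eq0]]]]].
  by left; exists x; split=> // i; rewrite -(enum_rankK i).
right; exists y, (fun i => z (enum_rank i)); do 2!split=> //.
move=> v; rewrite -[RHS](eq0 v) (reindex _ (onW_bij _ (@enum_val_bij I))).
by under eq_bigr do rewrite enum_valK.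
Qed.

End Motzkin.

Lemma psumr_gt0 (R : numDomainType) (I : finType) (F : I -> R) i0 :
  (forall i, 0 <= F i) -> 0 < F i0 -> 0 < \sum_i F i.
Proof.
move=> F_ge0 Fi0_gt0; rewrite (bigD1 i0) //=; apply: (lt_le_trans Fi0_gt0).
by rewrite lerDl sumr_ge0.
Qed.

Lemma sum_delta (R : nzRingType) (I : finType) (i0 : I) (F : I -> R) :
  \sum_i (i == i0)%:R * F i = F i0.
Proof.
by rewrite (bigD1 i0) //= eqxx mul1r big1 ?addr0 // => i /negbTE ->; rewrite mul0r.
Qed.

Lemma ffun_scale_addE (R : pzRingType) (T : finType) a (u v : {ffun T -> R^o}) t :
  (a *: u + v) t = a * u t + v t.
Proof. by rewrite !ffunE. Qed.

Section Market.
Variables (R : realType) (Omega : finType).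

Lemma eq_expect (P : {ffun Omega -> R}) X Y : X =1 Y -> expect P X = expect P Y.
Proof. by move=> eqXY; apply: eq_bigr => w _; rewrite eqXY. Qed.

Lemma expect_gt0P (P : {ffun Omega -> R}) X :
  (forall w, 0 <= P w) -> (forall w, 0 <= X w) ->
  0 < expect P X <-> exists w, 0 < P w /\ 0 < X w.
Proof.
move=> P_ge0 X_ge0; rewrite /expect; split=> [/lt0r_neq0/eqP|[w [Pw_gt0 Xw_gt0]]]; last first.
  by apply: (psumr_gt0 (i0 := w)) => [v|]; [rewrite mulr_ge0 | rewrite mulr_gt0].
case/(psumr_neq0P (fun v _ => mulr_ge0 (P_ge0 v) (X_ge0 v))) => w /= PXw_gt0.
have Pw_gt0 : 0 < P w.
  by rewrite lt_def P_ge0 andbT; apply: contraTneq PXw_gt0 => ->; rewrite mul0r ltxx.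
by exists w; split; rewrite // -(pmulr_rgt0 _ Pw_gt0).
Qed.

Lemma prob_has_atom (P : {ffun Omega -> R}) : is_prob P -> exists w, 0 < P w.
Proof.
case=> P_ge0 P1; have sumP_neq0 : \sum_w P w <> 0 by rewrite P1; exact/eqP/oner_neq0.
by have [w /= Pw_gt0] := psumr_neq0P (fun w _ => P_ge0 w) sumP_neq0; exists w.
Qed.

Lemma normalized_prob (x : Omega -> R) (w0 : Omega) : (forall w, 0 < x w) ->
  exists Q : {ffun Omega -> R}, [/\ is_prob Q, forall w, 0 < Q w &
    forall X, expect Q X = (\sum_w x w * X w) / \sum_w x w].
Proof.
move=> x_gt0; have sx_gt0 : 0 < \sum_w x w.
  by apply: (psumr_gt0 (i0 := w0)) => // w; apply: ltW.
exists [ffun w => x w / \sum_v x v]; split=> [|w|X]; last 2 first.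
- by rewrite ffunE divr_gt0.
- by rewrite /expect mulr_suml; apply: eq_bigr => w _; rewrite ffunE mulrAC.
split=> [w|]; first by rewrite ffunE divr_ge0 ?ltW.
by under eq_bigr do rewrite ffunE; rewrite -mulr_suml divff ?lt0r_neq0.
Qed.

Variables (M : nat) (r : R) (S0 : 'I_M -> R) (S1 : 'I_M -> Omega -> R).
Local Notation dS := (dS r S0 S1).

Definition gains (h : 'I_M -> R) (w : Omega) : R := \sum_(m < M) h m * dS m w.

Lemma V1_self_financing h0 h : V0 S0 h0 h = 0 -> V1 r S1 h0 h =1 gains h.
Proof.
rewrite /V0 => /eqP; rewrite addr_eq0 => /eqP-> w.
by rewrite /V1 /gains /dS addrC -sumrB; apply: eq_bigr => m _; rewrite mulrBr.
Qed.

Lemma expect_gains Q h : expect Q (gains h) = \sum_(m < M) h m * expect Q (dS m).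
Proof.
rewrite /expect /gains; under eq_bigr do rewrite mulr_sumr; rewrite exchange_big.
by apply: eq_bigr => m _; rewrite mulr_sumr; apply: eq_bigr => w _; rewrite mulrCA.
Qed.

Variable Pfam : {ffun Omega -> R} -> Prop.
Hypothesis Pfam_prob : forall P, Pfam P -> is_prob P.

Lemma NA_MU_supermartingale_measure (Q : {ffun Omega -> R}) :
  (forall w, 0 < Q w) -> (forall m, expect Q (dS m) <= 0) -> NA_MU r S0 S1 Pfam.
Proof.
move=> Q_gt0 EQdS_le0 [h0 [h [h_ge0 [V0_eq0 [V1_ge0 [P /Pfam_prob[P_ge0 _]]]]]]].
have V1E := V1_self_financing V0_eq0.
have gains_ge0 w : 0 <= gains h w by rewrite -V1E.
rewrite (eq_expect _ V1E) expect_gt0P // => -[w [_ gains_gt0]].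
have : 0 < expect Q (gains h) by apply/expect_gt0P => [v|//|]; [apply: ltW | exists w].
rewrite expect_gains ltNge sumr_le0 // => m _; exact: mulr_ge0_le0.
Qed.

Hypothesis Pfam_supp : forall w, exists2 P, Pfam P & 0 < P w.

Lemma NA_MU_no_gains h w1 : admissible h -> (forall w, 0 <= gains h w) ->
  0 < gains h w1 -> ~ NA_MU r S0 S1 Pfam.
Proof.
move=> h_ge0 gains_ge0 gains_gt0; apply; exists (- \sum_(m < M) h m * S0 m), h.
have V0_eq0 : V0 S0 (- \sum_(m < M) h m * S0 m) h = 0 by rewrite /V0 addNr.
have V1E := V1_self_financing V0_eq0.
do 3!split=> //; first by move=> w; rewrite V1E.
have [P PF Pw1_gt0] := Pfam_supp w1; have [P_ge0 _] := Pfam_prob PF.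
by exists P; rewrite // (eq_expect _ V1E) expect_gt0P //; exists w1.
Qed.

(* A vector v holds unnormalised state prices v (Some w) and a common lower
   bound v None, which is how the strict positivity of Q enters the system. *)
Definition state_price_constraint (i : Omega + 'I_M) (v : {ffun option Omega -> R^o}) : R :=
  match i with
  | inl w => v (Some w) - v None
  | inr m => - \sum_w v (Some w) * dS m w
  end.

Lemma linear_state_price_constraint i : linear_form (state_price_constraint i).
Proof.
case: i => [w|m] a u v /=; first by rewrite !ffun_scale_addE; ring.
under eq_bigr do rewrite ffun_scale_addE mulrDl -mulrA.
by rewrite big_split -mulr_sumr /=; ring.
Qed.

Definition state_price_floor (v : {ffun option Omega -> R^o}) : R := v None.

Lemma linear_state_price_floor : linear_form state_price_floor.
Proof. by move=> a u v; rewrite /state_price_floor ffun_scale_addE. Qed.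

Lemma supermartingale_measure_of_feasible (w0 : Omega) :
  feasible state_price_floor state_price_constraint ->
  exists Q : {ffun Omega -> R},
    [/\ is_prob Q, forall w, 0 < Q w & forall m, expect Q (dS m) <= 0].
Proof.
move=> [x [xNone_gt0 Cx_ge0]].
have x_gt0 w : 0 < x (Some w).
  by have := Cx_ge0 (inl w); rewrite /= subr_ge0; exact: lt_le_trans.
have [Q [Q_prob Q_gt0 EQ]] := normalized_prob w0 x_gt0.
exists Q; split=> // m; rewrite EQ mulr_le0_ge0 ?invr_ge0 ?sumr_ge0 // => [|w _].
  by rewrite -oppr_ge0; exact: (Cx_ge0 (inr m)).
exact: ltW.
Qed.

Lemma not_NA_MU_of_certificate :
  infeasibility_certificate state_price_floor state_price_constraint ->
  ~ NA_MU r S0 S1 Pfam.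
Proof.
move=> [y [z [y_gt0 [z_ge0 eq0]]]]; pose h m := z (inr m).
have dual (v : {ffun option Omega -> R^o}) :
    y * v None + \sum_w z (inl w) * (v (Some w) - v None) =
    \sum_m h m * \sum_w v (Some w) * dS m w.
  have := eq0 v; rewrite big_sumType /=; under [X in _ + (_ + X)]eq_bigr do rewrite mulrN.
  rewrite sumrN /state_price_floor; lra.
have y_eq : y = \sum_w z (inl w).
  have := dual [ffun i => (i == None)%:R].
  rewrite ffunE eqxx mulr1 [X in _ = X -> _]big1 => [|m _]; last first.
    by rewrite big1 ?mulr0 // => w _; rewrite ffunE mul0r.
  under eq_bigr do rewrite !ffunE sub0r mulrN1.
  rewrite sumrN; lra.
have gainsE w : gains h w = z (inl w).
  have := dual [ffun i => (i == Some w)%:R].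
  rewrite ffunE mulr0 add0r; under eq_bigr do rewrite !ffunE subr0 /= mulrC.
  rewrite sum_delta => ->; apply: eq_bigr => m _.
  by under eq_bigr do rewrite ffunE /=; rewrite sum_delta.
have sumz_neq0 : \sum_w z (inl w) <> 0 by rewrite -y_eq; apply/eqP; rewrite lt0r_neq0.
have [w1 /= zw1_gt0] := psumr_neq0P (fun w _ => z_ge0 (inl w)) sumz_neq0.
by apply: (NA_MU_no_gains (h := h) (w1 := w1)) => [m|w|]; rewrite ?gainsE //; exact: z_ge0.
Qed.

Lemma supermartingale_measure_NA_MU : (exists P, Pfam P) -> NA_MU r S0 S1 Pfam ->
  exists Q : {ffun Omega -> R},
    [/\ is_prob Q, forall w, 0 < Q w & forall m, expect Q (dS m) <= 0].
Proof.
move=> [P /Pfam_prob/prob_has_atom[w0 _]] NA.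
have [|/not_NA_MU_of_certificate//] :=
  motzkin linear_state_price_floor linear_state_price_constraint.
exact: supermartingale_measure_of_feasible.
Qed.

End Market.

Theorem mainTheorem2 (R : realType) (Omega : finType)
  (Pfam : {ffun Omega -> R} -> Prop)
  (HPprob : forall P, Pfam P -> is_prob P)
  (HPne : exists P, Pfam P)
  (HPsupp : forall w : Omega, exists2 P, Pfam P & 0 < P w)
  (M : nat) (r : R) (Hr : 0 <= r)
  (S0 : 'I_M -> R) (HS0 : forall m, 0 < S0 m)
  (S1 : 'I_M -> Omega -> R) :
  NA_MU r S0 S1 Pfam <->
  exists Q : {ffun Omega -> R},
    is_prob Q /\ (forall w, 0 < Q w) /\
    (forall m : 'I_M, expect Q (dS r S0 S1 m) <= 0).
Proof.
split=> [NA | [Q [_ [Q_gt0 EQdS_le0]]]].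
  have [Q [Q_prob Q_gt0 EQdS_le0]] := supermartingale_measure_NA_MU HPprob HPsupp HPne NA.
  by exists Q.
by apply: (NA_MU_supermartingale_measure HPprob Q_gt0).
Qed.
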